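(* Let $M\ge 2$ be an even integer, $N=2M+3$ (so $N=4n+3$ with $n\ge1$), and $s\in\mathbb{R}$. Let $H=H^N(s)=(h_1,\dots,h_N)$ be the Fibonacci-polynomial Huffman array defined in the context. Then its aperiodic auto-correlation $A_d=\sum_{i} h_i h_{i+d}$ (with $h_k=0$ for $k\notin\{1,\dots,N\}$), for $-(N-1)\le d\le N-1$, satisfies $A_d=0$ for all $0<|d|<N-1$, and $A_{N-1}=A_{-(N-1)}=-1$. That is, the auto-correlation is $[-1,0,\dots,0,A_0,0,\dots,0,-1]$.
   Context: Fibonacci polynomials: $F_0(s)=0$, $F_1(s)=1$, $F_{r+2}(s)=sF_{r+1}(s)+F_r(s)$ for all integers $r$ (extended to negative indices by the same recursion, so that $F_{-j}(s)=(-1)^{j+1}F_j(s)$). Write $F_j=F_j(s)$. For even $M\ge2$ and $N=2M+3$, the array $H^N(s)=(h_1,\dots,h_N)$ is defined by: $h_1=1$; $h_{1+j}=2sF_j$ for $j=1,\dots,M$; middle element $h_{M+2}=sF_{M+1}-2F_M$; $h_{M+2+j}=2sF_{-(M+1-j)}$ for $j=1,\dots,M$; $h_N=-1$. Equivalently $H^N(s)=2s\,[(2s)^{-1},F_1,\dots,F_M,F_{M+1}/2-F_M/s,F_{-M},\dots,F_{-1},-(2s)^{-1}]$. (E.g. for $s=1$, $M=6$: $[1,2,2,4,6,10,16,-3,-16,10,-6,4,-2,2,-1]$.) *)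

From Stdlib Require Import Reals Lra Lia ZArith.
Open Scope R_scope.

Fixpoint fibn (s : R) (n : nat) : R :=
  match n with
  | O => 0
  | S m => match m with
           | O => 1
           | S k => s * fibn s m + fibn s k
           end
  end.

(* Extension to all integer indices, via F_{-j} = (-1)^{j+1} F_j
   (this is exactly what the recursion extended backwards gives). *)
Definition fibz (s : R) (r : Z) : R :=
  if (0 <=? r)%Z then fibn s (Z.to_nat r)
  else (-1) ^ (S (Z.to_nat (- r))) * fibn s (Z.to_nat (- r)).

Definition huff (M : nat) (s : R) (k : Z) : R :=
  let m := Z.of_nat M in
  let N := (2 * m + 3)%Z in
  if (k =? 1)%Z then 1
  else if (andb (2 <=? k)%Z (k <=? m + 1)%Z) then 2 * s * fibz s (k - 1)
  else if (k =? m + 2)%Z then s * fibz s (m + 1) - 2 * fibz s m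
  else if (andb (m + 3 <=? k)%Z (k <=? N - 1)%Z) then
         2 * s * fibz s (- (m + 1 - (k - m - 2)))
  else if (k =? N)%Z then -1
  else 0.

Definition autocorr (M : nat) (s : R) (d : Z) : R :=
  sum_f_R0 (fun i => huff M s (Z.of_nat (S i)) * huff M s (Z.of_nat (S i) + d))
           (2 * M + 2).

From Stdlib Require Import Reals ZArith Arith Lia Lra.
Open Scope R_scope.

(* Let L be the Fibonacci operator (L f)(k) = f(k+1) - s f(k) - f(k-1) on
   functions Z -> R, and write m = M, N = 2m+3, T = s F_{m+1} + 2 F_m.

   1. The Huffman array h is built from two blocks of Fibonacci polynomials,
      so L h vanishes except near the block boundaries:
        L h = K - T K(. - (m+1)) - K(. - (2m+2)),  K = d_0 + s d_1 - d_2
      (lemma [huff_defect]; evenness of M enters through F_{-m} = -F_m and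
      F_{-m-1} = F_{m+1} at the junction of the blocks).
   2. L commutes with correlation in the shift variable, and correlating a
      function supported in the window against K yields -(L f)(1 - x).  Hence
      L A is the explicit finitely supported function [corr_defect], which
      for |d| >= 2 agrees with L of the claimed answer -d_{N-1} (d > 0),
      resp. -d_{-(N-1)} (d < 0).
   3. A solution of the second-order recurrence is determined by two
      consecutive values; since A vanishes for |d| >= N, propagating inwards
      from +N and from -N identifies A at every shift d <> 0. *)

Ltac decide_Z_tests :=
  repeat match goal with
  | |- context [(?a =? ?b)%Z] =>
      first [rewrite (proj2 (Z.eqb_eq a b)) by lia | rewrite (proj2 (Z.eqb_neq a b)) by lia]
  | |- context [(?a <=? ?b)%Z] =>
      first [rewrite (proj2 (Z.leb_le a b)) by lia | rewrite (proj2 (Z.leb_gt a b)) by lia]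
  end; cbn [andb].

Lemma fibz_rec (s : R) (r : Z) : fibz s (r + 2) = s * fibz s (r + 1) + fibz s r.
Proof.
  unfold fibz.
  destruct (Z_le_gt_dec 0 r) as [Hr | Hr].
  - decide_Z_tests.
    replace (Z.to_nat (r + 2)) with (S (S (Z.to_nat r))) by lia.
    replace (Z.to_nat (r + 1)) with (S (Z.to_nat r)) by lia.
    reflexivity.
  - destruct (Z.eq_dec r (-1)) as [->|]; [simpl; ring|].
    destruct (Z.eq_dec r (-2)) as [->|]; [simpl; ring|].
    decide_Z_tests.
    replace (Z.to_nat (- r)) with (S (S (S (Z.to_nat (- r) - 3)))) by lia.
    replace (Z.to_nat (- (r + 1))) with (S (S (Z.to_nat (- r) - 3))) by lia.
    replace (Z.to_nat (- (r + 2))) with (S (Z.to_nat (- r) - 3)) by lia.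
    set (q := (Z.to_nat (- r) - 3)%nat).
    change (fibn s (S (S (S q)))) with (s * fibn s (S (S q)) + fibn s (S q)).
    cbn [pow]. ring.
Qed.

Lemma fibz_rec_at (s : R) (a b c : Z) :
  b = (a + 1)%Z -> c = (a + 2)%Z -> fibz s c = s * fibz s b + fibz s a.
Proof. intros -> ->. apply fibz_rec. Qed.

Lemma fibz_opp (s : R) (j : nat) :
  fibz s (- Z.of_nat j) = (-1) ^ S j * fibz s (Z.of_nat j).
Proof.
  unfold fibz. destruct j as [|j]; [cbn; ring|].
  decide_Z_tests. rewrite Z.opp_involutive, Nat2Z.id. ring.
Qed.

Lemma fibz_opp_even (s : R) (j : nat) :
  Nat.Even j -> fibz s (- Z.of_nat j) = - fibz s (Z.of_nat j).
Proof. intros [q ->]. rewrite fibz_opp, pow_1_odd. ring. Qed.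

Lemma fibz_opp_odd (s : R) (j : nat) :
  Nat.Odd j -> fibz s (- Z.of_nat j) = fibz s (Z.of_nat j).
Proof.
  intros [q ->]. rewrite fibz_opp.
  replace (S (2 * q + 1)) with (2 * S q)%nat by lia.
  rewrite pow_1_even. ring.
Qed.

Lemma fibz_1 (s : R) : fibz s 1 = 1.        Proof. reflexivity. Qed.
Lemma fibz_2 (s : R) : fibz s 2 = s.        Proof. unfold fibz; simpl. ring. Qed.
Lemma fibz_m1 (s : R) : fibz s (-1) = 1.    Proof. unfold fibz; simpl. ring. Qed.
Lemma fibz_m2 (s : R) : fibz s (-2) = - s.  Proof. unfold fibz; simpl. ring. Qed.

Lemma huff_outside (M : nat) (s : R) (k : Z) :
  (k < 1 \/ 2 * Z.of_nat M + 3 < k)%Z -> huff M s k = 0.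
Proof. intros Hk. unfold huff; cbv zeta. destruct Hk; decide_Z_tests; reflexivity. Qed.

Lemma huff_first (M : nat) (s : R) : huff M s 1 = 1.
Proof. unfold huff; cbv zeta. decide_Z_tests. reflexivity. Qed.

Lemma huff_rising (M : nat) (s : R) (k : Z) :
  (2 <= k <= Z.of_nat M + 1)%Z -> huff M s k = 2 * s * fibz s (k - 1).
Proof. intros Hk. unfold huff; cbv zeta. decide_Z_tests. reflexivity. Qed.

Lemma huff_middle (M : nat) (s : R) :
  huff M s (Z.of_nat M + 2) = s * fibz s (Z.of_nat M + 1) - 2 * fibz s (Z.of_nat M).
Proof. unfold huff; cbv zeta. decide_Z_tests. reflexivity. Qed.

Lemma huff_falling (M : nat) (s : R) (k : Z) :
  (Z.of_nat M + 3 <= k <= 2 * Z.of_nat M + 2)%Z ->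
  huff M s k = 2 * s * fibz s (k - 2 * Z.of_nat M - 3).
Proof. intros Hk. unfold huff; cbv zeta. decide_Z_tests. do 3 f_equal. ring. Qed.

Lemma huff_last (M : nat) (s : R) : huff M s (2 * Z.of_nat M + 3) = -1.
Proof. unfold huff; cbv zeta. decide_Z_tests. reflexivity. Qed.

Definition fibop (s : R) (f : Z -> R) (k : Z) : R := f (k + 1)%Z - s * f k - f (k - 1)%Z.

Definition indz (a b : Z) : R := if (a =? b)%Z then 1 else 0.

Definition kernel (s : R) (y : Z) : R := indz y 0 + s * indz y 1 - indz y 2.

Definition junction (M : nat) (s : R) : R :=
  s * fibz s (Z.of_nat M + 1) + 2 * fibz s (Z.of_nat M).

Definition defect (M : nat) (s : R) (k : Z) : R :=
  kernel s k - junction M s * kernel s (k - (Z.of_nat M + 1))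
  - kernel s (k - (2 * Z.of_nat M + 2)).

Ltac eval_defect :=
  unfold defect, junction, kernel, indz; decide_Z_tests;
  repeat match goal with m := Z.of_nat ?M |- context [Z.of_nat ?M] => fold m end.

Lemma huff_defect_outer (M : nat) (s : R) (k : Z) :
  (2 <= M)%nat -> (k <= 2 \/ 2 * Z.of_nat M + 2 <= k)%Z ->
  fibop s (huff M s) k = defect M s k.
Proof.
  intros HM Hk. unfold fibop.
  set (m := Z.of_nat M) in *.
  destruct (Z_lt_le_dec k 0).
  { rewrite !huff_outside by lia. eval_defect. ring. }
  destruct (Z.eq_dec k 0) as [->|].
  { change (0 + 1)%Z with 1%Z. rewrite huff_first, !huff_outside by lia. eval_defect. ring. }
  destruct (Z.eq_dec k 1) as [->|].
  { change (1 + 1)%Z with 2%Z; change (1 - 1)%Z with 0%Z.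
    rewrite huff_first, huff_rising, huff_outside by lia. eval_defect.
    change (2 - 1)%Z with 1%Z. rewrite fibz_1. ring. }
  destruct (Z.eq_dec k 2) as [->|].
  { change (2 + 1)%Z with 3%Z; change (2 - 1)%Z with 1%Z.
    rewrite huff_first, !huff_rising by lia. eval_defect.
    change (3 - 1)%Z with 2%Z; change (2 - 1)%Z with 1%Z. rewrite fibz_1, fibz_2. ring. }
  destruct (Z.eq_dec k (2 * m + 2)) as [->|].
  { replace (2 * m + 2 + 1)%Z with (2 * m + 3)%Z by ring.
    rewrite huff_last, !huff_falling by lia. eval_defect.
    replace (2 * m + 2 - 2 * m - 3)%Z with (-1)%Z by ring.
    replace (2 * m + 2 - 1 - 2 * m - 3)%Z with (-2)%Z by ring.
    rewrite fibz_m1, fibz_m2. ring. }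
  destruct (Z.eq_dec k (2 * m + 3)) as [->|].
  { replace (2 * m + 3 - 1)%Z with (2 * m + 2)%Z by ring.
    rewrite huff_last, huff_outside, huff_falling by lia. eval_defect.
    replace (2 * m + 2 - 2 * m - 3)%Z with (-1)%Z by ring.
    rewrite fibz_m1. ring. }
  destruct (Z.eq_dec k (2 * m + 4)) as [->|].
  { replace (2 * m + 4 - 1)%Z with (2 * m + 3)%Z by ring.
    rewrite huff_last, !huff_outside by lia. eval_defect. ring. }
  rewrite !huff_outside by lia. eval_defect. ring.
Qed.

Lemma huff_defect_inner (M : nat) (s : R) (k : Z) :
  (2 <= M)%nat -> Nat.Even M -> (3 <= k <= 2 * Z.of_nat M + 1)%Z ->
  fibop s (huff M s) k = defect M s k.
Proof.
  intros HM Heven Hk. unfold fibop.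
  assert (Hflip_m : fibz s (- Z.of_nat M) = - fibz s (Z.of_nat M))
    by (apply fibz_opp_even; exact Heven).
  assert (Hflip_m1 : fibz s (- (Z.of_nat M + 1)) = fibz s (Z.of_nat M + 1)).
  { replace (Z.of_nat M + 1)%Z with (Z.of_nat (S M)) by lia.
    apply fibz_opp_odd, Nat.Odd_succ; exact Heven. }
  set (m := Z.of_nat M) in *.
  destruct (Z_le_gt_dec k m).
  { rewrite !huff_rising by lia. eval_defect.
    rewrite (fibz_rec_at s (k - 1 - 1) (k - 1) (k + 1 - 1)) by ring. ring. }
  destruct (Z.eq_dec k (m + 1)) as [->|].
  { replace (m + 1 + 1)%Z with (m + 2)%Z by ring.
    rewrite huff_middle, !huff_rising by lia. eval_defect.
    replace (m + 1 - 1)%Z with m by ring.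
    rewrite (fibz_rec_at s (m - 1) m (m + 1)) by ring. ring. }
  destruct (Z.eq_dec k (m + 2)) as [->|].
  { replace (m + 2 - 1)%Z with (m + 1)%Z by ring.
    rewrite huff_middle, (huff_rising M s (m + 1)), huff_falling by lia. eval_defect.
    replace (m + 1 - 1)%Z with m by ring.
    replace (m + 2 + 1 - 2 * m - 3)%Z with (- m)%Z by ring.
    rewrite Hflip_m. ring. }
  destruct (Z.eq_dec k (m + 3)) as [->|].
  { replace (m + 3 - 1)%Z with (m + 2)%Z by ring.
    rewrite huff_middle, !huff_falling by lia. eval_defect.
    replace (m + 3 - 2 * m - 3)%Z with (- m)%Z by ring.
    rewrite (fibz_rec_at s (- (m + 1)) (- m) (m + 3 + 1 - 2 * m - 3)) by ring.
    rewrite Hflip_m, Hflip_m1. ring. }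
  rewrite !huff_falling by lia. eval_defect.
  rewrite (fibz_rec_at s (k - 1 - 2 * m - 3) (k - 2 * m - 3) (k + 1 - 2 * m - 3)) by ring.
  ring.
Qed.

Lemma huff_defect (M : nat) (s : R) (k : Z) :
  (2 <= M)%nat -> Nat.Even M -> fibop s (huff M s) k = defect M s k.
Proof.
  intros HM Heven.
  destruct (Z_le_gt_dec 3 k); destruct (Z_le_gt_dec k (2 * Z.of_nat M + 1)).
  - apply huff_defect_inner; auto.
  - apply huff_defect_outer; auto; lia.
  - apply huff_defect_outer; auto; lia.
  - lia.
Qed.

Definition wcorr (n : nat) (f g : Z -> R) (x : Z) : R :=
  sum_f_R0 (fun i => f (Z.of_nat (S i)) * g (Z.of_nat (S i) + x)%Z) n.

Definition supported_in (n : nat) (f : Z -> R) : Prop :=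
  forall k : Z, (k < 1 \/ Z.of_nat (S n) < k)%Z -> f k = 0.

Lemma wcorr_ext (n : nat) (f g1 g2 : Z -> R) (x1 x2 : Z) :
  (forall i : nat, g1 (Z.of_nat (S i) + x1)%Z = g2 (Z.of_nat (S i) + x2)%Z) ->
  wcorr n f g1 x1 = wcorr n f g2 x2.
Proof. intros Hg. apply sum_eq. intros i _. rewrite Hg. reflexivity. Qed.

Lemma wcorr_lin (n : nat) (f g1 g2 g3 : Z -> R) (t : R) (x : Z) :
  wcorr n f (fun y => g1 y - t * g2 y - g3 y) x
  = wcorr n f g1 x - t * wcorr n f g2 x - wcorr n f g3 x.
Proof.
  unfold wcorr. rewrite scal_sum, <- !minus_sum.
  apply sum_eq. intros i _. ring.
Qed.

Lemma wcorr_fibop (s : R) (n : nat) (f g : Z -> R) (x : Z) :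
  fibop s (wcorr n f g) x = wcorr n f (fibop s g) x.
Proof.
  unfold fibop, wcorr. rewrite scal_sum, <- !minus_sum.
  apply sum_eq. intros i _.
  replace (Z.of_nat (S i) + (x + 1))%Z with (Z.of_nat (S i) + x + 1)%Z by ring.
  replace (Z.of_nat (S i) + (x - 1))%Z with (Z.of_nat (S i) + x - 1)%Z by ring.
  ring.
Qed.

Lemma wcorr_shift (n : nat) (f g : Z -> R) (c x : Z) :
  wcorr n f (fun y => g (y - c)%Z) x = wcorr n f g (x - c).
Proof.
  apply wcorr_ext. intros i.
  replace (Z.of_nat (S i) + x - c)%Z with (Z.of_nat (S i) + (x - c))%Z by ring.
  reflexivity.
Qed.

Lemma wcorr_point_window (n : nat) (f : Z -> R) (c x : Z) :
  wcorr n f (fun y => indz y c) x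
  = if andb (1 <=? c - x)%Z (c - x <=? Z.of_nat (S n))%Z then f (c - x)%Z else 0.
Proof.
  unfold wcorr, indz. induction n as [|n IH]; cbn [sum_f_R0].
  - destruct (Z.eqb_spec (Z.of_nat 1 + x) c).
    + decide_Z_tests. replace (c - x)%Z with (Z.of_nat 1) by lia. ring.
    + destruct ((1 <=? c - x)%Z && (c - x <=? Z.of_nat 1)%Z)%bool eqn:Hw; [|ring].
      apply andb_prop in Hw as [Hlo Hhi].
      apply Z.leb_le in Hlo, Hhi. lia.
  - rewrite IH. destruct (Z.eqb_spec (Z.of_nat (S (S n)) + x) c).
    + decide_Z_tests. replace (c - x)%Z with (Z.of_nat (S (S n))) by lia. ring.
    + destruct (Z_le_gt_dec 1 (c - x)); destruct (Z_le_gt_dec (c - x) (Z.of_nat (S n)));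
        decide_Z_tests; ring.
Qed.

Lemma wcorr_point (n : nat) (f : Z -> R) (c x : Z) :
  supported_in n f -> wcorr n f (fun y => indz y c) x = f (c - x)%Z.
Proof.
  intros Hf. rewrite wcorr_point_window.
  destruct (Z_le_gt_dec 1 (c - x)); destruct (Z_le_gt_dec (c - x) (Z.of_nat (S n)));
    decide_Z_tests; try reflexivity; rewrite Hf by lia; reflexivity.
Qed.

Lemma wcorr_kernel (s : R) (n : nat) (f : Z -> R) (x : Z) :
  supported_in n f -> wcorr n f (kernel s) x = - fibop s f (1 - x).
Proof.
  intros Hf.
  transitivity (wcorr n f (fun y => indz y 0 - (- s) * indz y 1 - indz y 2) x).
  { apply wcorr_ext. intros i. unfold kernel. ring. }
  rewrite wcorr_lin, !wcorr_point by exact Hf. unfold fibop.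
  replace (1 - x + 1)%Z with (2 - x)%Z by ring.
  replace (1 - x - 1)%Z with (0 - x)%Z by ring.
  ring.
Qed.

Lemma huff_supported (M : nat) (s : R) : supported_in (2 * M + 2) (huff M s).
Proof. intros k Hk. apply huff_outside. lia. Qed.

(* The explicit value of L A obtained from steps 1 and 2. *)
Definition corr_defect (M : nat) (s : R) (d : Z) : R :=
  - defect M s (1 - d)
  + junction M s * defect M s (1 - (d - (Z.of_nat M + 1)))
  + defect M s (1 - (d - (2 * Z.of_nat M + 2))).

Lemma autocorr_fibop (M : nat) (s : R) (d : Z) :
  (2 <= M)%nat -> Nat.Even M -> fibop s (autocorr M s) d = corr_defect M s d.
Proof.
  intros HM Heven.
  change (autocorr M s) with (wcorr (2 * M + 2) (huff M s) (huff M s)).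
  rewrite wcorr_fibop.
  transitivity (wcorr (2 * M + 2) (huff M s) (defect M s) d).
  { apply wcorr_ext. intros i. apply huff_defect; assumption. }
  unfold defect at 1.
  rewrite wcorr_lin, !wcorr_shift, !wcorr_kernel by apply huff_supported.
  rewrite !huff_defect by assumption.
  unfold corr_defect. ring.
Qed.

Ltac settle_at d c := destruct (Z.eq_dec d c) as [->|]; [eval_defect; ring|].

(* For d >= 2, L A agrees with L of -d_{N-1}; the kernels at the ends
   cancel against each other, as do those at the middle. *)
Lemma corr_defect_pos (M : nat) (s : R) (d : Z) :
  (2 <= M)%nat -> (2 <= d)%Z ->
  corr_defect M s d = fibop s (fun e => - indz e (2 * Z.of_nat M + 2)) d.
Proof.
  intros HM Hd. unfold corr_defect, fibop.
  settle_at d (Z.of_nat M)%Z. settle_at d (Z.of_nat M + 1)%Z. settle_at d (Z.of_nat M + 2)%Z.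
  settle_at d (2 * Z.of_nat M + 1)%Z. settle_at d (2 * Z.of_nat M + 2)%Z.
  settle_at d (2 * Z.of_nat M + 3)%Z.
  eval_defect. ring.
Qed.

Lemma corr_defect_neg (M : nat) (s : R) (d : Z) :
  (2 <= M)%nat -> (d <= -2)%Z ->
  corr_defect M s d = fibop s (fun e => - indz e (- (2 * Z.of_nat M + 2))) d.
Proof.
  intros HM Hd. unfold corr_defect, fibop.
  settle_at d (- Z.of_nat M)%Z. settle_at d (- Z.of_nat M - 1)%Z. settle_at d (- Z.of_nat M - 2)%Z.
  settle_at d (- (2 * Z.of_nat M + 1))%Z. settle_at d (- (2 * Z.of_nat M + 2))%Z.
  settle_at d (- (2 * Z.of_nat M + 3))%Z.
  eval_defect. ring.
Qed.

Lemma fibop_agree_down (s : R) (f g : Z -> R) (a : Z) (n : nat) :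
  f a = g a -> f (a + 1)%Z = g (a + 1)%Z ->
  (forall k, (a - Z.of_nat n < k <= a)%Z -> fibop s f k = fibop s g k) ->
  forall k, (a - Z.of_nat n <= k <= a + 1)%Z -> f k = g k.
Proof.
  intros Ha Ha1. induction n as [|n IH]; intros Hop k Hk.
  - destruct (Z.eq_dec k a) as [->|]; [exact Ha|].
    replace k with (a + 1)%Z by lia. exact Ha1.
  - assert (Hprev : forall j, (a - Z.of_nat n <= j <= a + 1)%Z -> f j = g j).
    { apply IH. intros j Hj. apply Hop. lia. }
    destruct (Z.eq_dec k (a - Z.of_nat (S n))) as [Hk_low|]; [|apply Hprev; lia].
    set (j := (a - Z.of_nat n)%Z).
    assert (Hstep : fibop s f j = fibop s g j) by (apply Hop; unfold j; lia).
    unfold fibop in Hstep.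
    rewrite (Hprev j), (Hprev (j + 1)%Z) in Hstep by (unfold j; lia).
    replace k with (j - 1)%Z by (unfold j; lia). lra.
Qed.

Lemma fibop_reflect (s : R) (f : Z -> R) (k : Z) :
  fibop (- s) (fun x => f (- x)%Z) k = - fibop s f (- k).
Proof.
  unfold fibop.
  replace (- (k + 1))%Z with (- k - 1)%Z by ring.
  replace (- (k - 1))%Z with (- k + 1)%Z by ring.
  ring.
Qed.

Lemma fibop_agree_up (s : R) (f g : Z -> R) (a : Z) (n : nat) :
  f a = g a -> f (a - 1)%Z = g (a - 1)%Z ->
  (forall k, (a <= k < a + Z.of_nat n)%Z -> fibop s f k = fibop s g k) ->
  forall k, (a - 1 <= k <= a + Z.of_nat n)%Z -> f k = g k.
Proof.
  intros Ha Ha1 Hop k Hk.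
  rewrite <- (Z.opp_involutive k).
  apply (fibop_agree_down (- s) (fun x => f (- x)%Z) (fun x => g (- x)%Z) (- a) n).
  - rewrite Z.opp_involutive. exact Ha.
  - replace (- (- a + 1))%Z with (a - 1)%Z by ring. exact Ha1.
  - intros j Hj. rewrite !fibop_reflect, Hop by lia. reflexivity.
  - lia.
Qed.

Lemma autocorr_far (M : nat) (s : R) (d : Z) :
  (2 * Z.of_nat M + 3 <= Z.abs d)%Z -> autocorr M s d = 0.
Proof.
  intros Hd. unfold autocorr.
  apply sum_eq_R0. intros i Hi. rewrite (huff_outside M s (Z.of_nat (S i) + d)) by lia. ring.
Qed.

Lemma autocorr_positive_shifts (M : nat) (s : R) :
  (2 <= M)%nat -> Nat.Even M ->
  forall d : Z, (1 <= d <= 2 * Z.of_nat M + 4)%Z ->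
  autocorr M s d = - indz d (2 * Z.of_nat M + 2).
Proof.
  intros HM Heven d Hd.
  apply (fibop_agree_down s _ (fun e => - indz e (2 * Z.of_nat M + 2))
           (2 * Z.of_nat M + 3) (2 * M + 2)).
  - rewrite autocorr_far by lia. unfold indz. decide_Z_tests. ring.
  - rewrite autocorr_far by lia. unfold indz. decide_Z_tests. ring.
  - intros k Hk. rewrite autocorr_fibop, corr_defect_pos by (assumption || lia).
    reflexivity.
  - lia.
Qed.

Lemma autocorr_negative_shifts (M : nat) (s : R) :
  (2 <= M)%nat -> Nat.Even M ->
  forall d : Z, (- (2 * Z.of_nat M + 4) <= d <= -1)%Z ->
  autocorr M s d = - indz d (- (2 * Z.of_nat M + 2)).
Proof.
  intros HM Heven d Hd.
  apply (fibop_agree_up s _ (fun e => - indz e (- (2 * Z.of_nat M + 2)))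
           (- (2 * Z.of_nat M + 3)) (2 * M + 2)).
  - rewrite autocorr_far by lia. unfold indz. decide_Z_tests. ring.
  - rewrite autocorr_far by lia. unfold indz. decide_Z_tests. ring.
  - intros k Hk. rewrite autocorr_fibop, corr_defect_neg by (assumption || lia).
    reflexivity.
  - lia.
Qed.

Theorem mainTheorem1 (M : nat) (s : R) :
  (2 <= M)%nat -> Nat.Even M ->
  let N := Z.of_nat (2 * M + 3) in
  (forall d : Z, (0 < Z.abs d < N - 1)%Z -> autocorr M s d = 0) /\
  autocorr M s (N - 1) = -1 /\ autocorr M s (- (N - 1)) = -1.
Proof.
  intros HM Heven N.
  replace N with (2 * Z.of_nat M + 3)%Z by (unfold N; lia).
  split; [|split].
  - intros d Hd. destruct (Z_lt_le_dec 0 d).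
    + rewrite autocorr_positive_shifts by (assumption || lia).
      unfold indz. decide_Z_tests. ring.
    + rewrite autocorr_negative_shifts by (assumption || lia).
      unfold indz. decide_Z_tests. ring.
  - rewrite autocorr_positive_shifts by (assumption || lia).
    unfold indz. decide_Z_tests. ring.
  - rewrite autocorr_negative_shifts by (assumption || lia).
    unfold indz. decide_Z_tests. ring.
Qed.
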